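(* Let $\boldsymbol{M}$ be a weight sequence with $\gamma(\boldsymbol{M})>0$. Then $\mathcal{M}(C_{\{\boldsymbol{M}\}}(0,\infty))\subset\Lambda_{\{\boldsymbol{M}\}}$ if and only if $\boldsymbol{M}$ satisfies $\operatorname{(dc)}$.
   Context: Sequences are of positive reals indexed by $\mathbb{N}_0$; $m_p=M_{p+1}/M_p$. Weight sequence: $M_0=1$, $M_p^2\le M_{p-1}M_{p+1}$ ($p\ge1$), $m_p\to\infty$. $\operatorname{(dc)}$: there are $C_0>0$, $H>1$ with $M_{p+1}\le C_0H^{p+1}M_p$ for all $p$. A sequence $(c_p)$ is almost increasing if $c_p\le ac_q$ for all $q\ge p$, some $a>0$; $\gamma(\boldsymbol{M})=\sup\{\mu>0:(m_p/(p+1)^\mu)_p\text{ almost increasing}\}\in[0,\infty]$. $C_{\{\boldsymbol{M}\}}(0,\infty)$ is the space of continuous $\varphi$ on $(0,\infty)$ with $\sup_p\sup_{x>0}x^p|\varphi(x)|/(h^pM_p)<\infty$ for some $h>0$. $\Lambda_{\{\boldsymbol{M}\}}$ is the space of complex sequences $(c_p)$ with $\sup_p|c_p|/(h^pM_p)<\infty$ for some $h>0$. $\mathcal{M}(\varphi)=(\int_0^\infty x^p\varphi(x)\,dx)_{p\in\mathbb{N}_0}$. *)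

From HB Require Import structures.
From mathcomp Require Import all_boot all_order all_algebra.
From mathcomp Require Import all_classical all_reals all_analysis.
From mathcomp Require complex.
Set Implicit Arguments. Unset Strict Implicit. Unset Printing Implicit Defensive.
Import Order.TTheory GRing.Theory Num.Theory.
Import numFieldNormedType.Exports.
Local Open Scope classical_set_scope.
Local Open Scope ring_scope.

Definition quot_seq (R : realType) (M : nat -> R) (p : nat) : R := M p.+1 / M p.

Definition weight_sequence (R : realType) (M : nat -> R) : Prop :=
  (forall p, 0 < M p) /\ M 0%N = 1 /\
  (forall p, (1 <= p)%N -> M p ^+ 2 <= M p.-1 * M p.+1) /\
  (quot_seq M @ \oo --> +oo).

Definition dc (R : realType) (M : nat -> R) : Prop :=
  exists C0 H : R, 0 < C0 /\ 1 < H /\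
    forall p, M p.+1 <= C0 * H ^+ p.+1 * M p.

Definition almost_increasing (R : realType) (c : nat -> R) : Prop :=
  exists a : R, 0 < a /\ forall p q : nat, (p <= q)%N -> c p <= a * c q.

(* gamma(M) = sup {mu > 0 : (m_p/(p+1)^mu)_p almost increasing}, in \bar R;
   the sup of the empty set is -oo here (the paper's convention gives 0;
   only the condition 0 < gamma M matters, and it agrees). *)
Definition gamma_index (R : realType) (M : nat -> R) : \bar R :=
  ereal_sup [set (mu%:E)%E | mu in
    [set mu : R | 0 < mu /\
       almost_increasing (fun p => quot_seq M p / (p.+1%:R `^ mu))]].

Definition C_M (R : realType) (M : nat -> R) (phi : R -> complex.complex R) : Prop :=
  {in `]0, +oo[%classic, continuous (fun x => complex.Re (phi x))} /\
  {in `]0, +oo[%classic, continuous (fun x => complex.Im (phi x))} /\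
  exists h : R, 0 < h /\ exists C : R, forall (p : nat) (x : R), 0 < x ->
     x ^+ p * complex.ComplexField.Normc.normc (phi x) / (h ^+ p * M p) <= C.

Definition Lambda_M (R : realType) (M : nat -> R) (c : nat -> complex.complex R) : Prop :=
  exists h : R, 0 < h /\ exists C : R, forall p : nat,
     complex.ComplexField.Normc.normc (c p) / (h ^+ p * M p) <= C.

Definition moments (R : realType) (phi : R -> complex.complex R) (p : nat)
  : complex.complex R :=
  complex.Complex
    (Rintegral lebesgue_measure `]0, +oo[%classic
       (fun x => x ^+ p * complex.Re (phi x)))
    (Rintegral lebesgue_measure `]0, +oo[%classic
       (fun x => x ^+ p * complex.Im (phi x))).

(* If (dc) holds and x^q |phi x| <= C h^q M_q for all q, then
   (1 + x^2) |x^p phi x| <= C h^p (M_p + h^2 M_{p+2}); integrating against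
   1 / (1 + x^2) bounds the p-th moment by pi C h^p (M_p + h^2 M_{p+2}), and
   (dc) applied twice gives M_{p+2} <= C0^2 H^(2p+3) M_p.
   Conversely, phi x = inf_q M_q / x^q lies in C_{M} (with h = 1), is
   continuous because near any x only finitely many q compete for the infimum,
   and by log-convexity equals M_p / x^p on [m_{p-1}, m_p].  Its p-th moment is
   therefore at least M_p (m_p - m_{p-1}), so the inclusion yields
   m_p - m_{p-1} <= C h^p, hence m_p <= K (1 + h)^p, which is (dc). *)

From mathcomp Require Import all_boot all_order all_algebra.
From mathcomp Require Import all_classical all_reals all_analysis.
From mathcomp Require complex.
From mathcomp Require Import measurable_realfun ring lra.
Import Order.TTheory GRing.Theory Num.Theory.
Import numFieldNormedType.Exports.
Local Open Scope classical_set_scope.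
Local Open Scope ring_scope.

Local Notation normc := (@complex.ComplexField.Normc.normc _).

Section ComplexNorm.
Context {R : realType}.

Lemma normc_ge_Re (z : complex.complex R) : `|complex.Re z| <= normc z.
Proof.
case: z => a b; rewrite -sqrtr_sqr; apply: ler_wsqrtr.
by rewrite /= lerDl sqr_ge0.
Qed.

Lemma normc_ge_Im (z : complex.complex R) : `|complex.Im z| <= normc z.
Proof.
case: z => a b; rewrite -sqrtr_sqr; apply: ler_wsqrtr.
by rewrite /= lerDr sqr_ge0.
Qed.

Lemma normc_le_normD (a b : R) : normc (complex.Complex a b) <= `|a| + `|b|.
Proof.
rewrite -[leRHS]ger0_norm ?addr_ge0// -sqrtr_sqr; apply: ler_wsqrtr.
rewrite sqrrD -[a ^+ 2]real_normK ?num_real// -[b ^+ 2]real_normK ?num_real//.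
by rewrite -[leRHS]addrA lerD2l ler_wpDl// mulrn_wge0// mulr_ge0.
Qed.

Lemma normc_real (a : R) : normc (complex.Complex a 0) = `|a|.
Proof. by rewrite /= expr0n addr0 sqrtr_sqr. Qed.

End ComplexNorm.

Section OneDsqrDomination.
Context {R : realType}.
Local Notation mu := (@lebesgue_measure R).
Local Notation I0y := (`]0, +oo[%classic : set R).

Lemma integrable_oneDsqrV : mu.-integrable I0y (EFin \o (fun x : R => (oneDsqr x)^-1)).
Proof.
apply: (@integrableS _ _ _ mu `[0, +oo[) => //.
  by apply: subset_itvr; rewrite bnd_simp.
apply/integrableP; split.
  apply/measurable_EFinP; apply: measurable_funS (continuous_measurable_fun _) => //.
  exact: continuous_oneDsqrV.
under eq_integral do rewrite /= ger0_norm ?invr_ge0 ?(le_trans _ (oneDsqr_ge1 _))//.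
by rewrite integral0y_oneDsqr ltry.
Qed.

Lemma Rintegral0y_oneDsqrV : \int[mu]_(x in I0y) (oneDsqr x)^-1 = pi / 2.
Proof.
rewrite Rintegral_itv_obnd_cbnd; last exact: integrable_oneDsqrV.
by rewrite /Rintegral integral0y_oneDsqr.
Qed.

Lemma oneDsqrV_dominated (f : R -> R) (c : R) :
  measurable_fun I0y f -> (forall x, 0 < x -> `|f x| <= c * (oneDsqr x)^-1) ->
  mu.-integrable I0y (EFin \o f) /\ `|\int[mu]_(x in I0y) f x| <= c * (pi / 2).
Proof.
move=> mf f_dom.
have {}f_dom x : I0y x -> `|f x| <= c * (oneDsqr x)^-1.
  by rewrite /= in_itv /= andbT; exact: f_dom.
have int_dom : mu.-integrable I0y (EFin \o (fun x => c * (oneDsqr x)^-1)).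
  exact: integrableZl integrable_oneDsqrV.
have int_f : mu.-integrable I0y (EFin \o f).
  apply: le_integrable int_dom => //; first exact/measurable_EFinP.
  by move=> x /f_dom fx; rewrite lee_fin (le_trans fx (ler_norm _)).
split=> //; apply: le_trans (le_normr_Rintegral _ _) _ => //.
rewrite -Rintegral0y_oneDsqrV -RintegralZl//; last exact: integrable_oneDsqrV.
apply: le_Rintegral => //; exact: integrable_norm.
Qed.

Lemma moment_dominated (f : R -> R) (p : nat) (A B : R) :
  {in I0y, continuous f} ->
  (forall x, 0 < x -> x ^+ p * `|f x| <= A) ->
  (forall x, 0 < x -> x ^+ p.+2 * `|f x| <= B) ->
  mu.-integrable I0y (EFin \o (fun x => x ^+ p * f x)) /\
  `|\int[mu]_(x in I0y) (x ^+ p * f x)| <= (A + B) * (pi / 2).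
Proof.
move=> cf fA fB; apply: oneDsqrV_dominated.
  apply: open_continuous_measurable_fun; first exact: rray_open.
  by move=> x x0; exact: continuousM (@exprn_continuous _ p x) (cf x x0).
move=> x x0; have x2 : 0 < oneDsqr x by rewrite (lt_le_trans ltr01).
rewrite ler_pdivlMr// /oneDsqr mulrDr mulr1 normrM.
rewrite (ger0_norm (exprn_ge0 p (ltW x0))) lerD ?fA//.
by rewrite mulrAC -exprD addn2 fB.
Qed.

End OneDsqrDomination.

Section WeightSequence.
Context {R : realType} (M : nat -> R).
Hypothesis M_gt0 : forall p, 0 < M p.
Hypothesis M_logconvex : forall p, (1 <= p)%N -> M p ^+ 2 <= M p.-1 * M p.+1.
Local Notation m := (quot_seq M).
Local Notation mu := (@lebesgue_measure R).
Local Notation I0y := (`]0, +oo[%classic : set R).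

Lemma quot_seq_gt0 p : 0 < m p.
Proof. by rewrite divr_gt0. Qed.

Lemma quot_seq_nondecreasing : nondecreasing_seq m.
Proof.
apply/nondecreasing_seqP => p; rewrite /quot_seq ler_pdivrMr// mulrC mulrA.
by rewrite ler_pdivlMr// -expr2 M_logconvex.
Qed.

Definition Mdiv (q : nat) (x : R) : R := M q / x ^+ q.

Lemma Mdiv_gt0 q x : 0 < x -> 0 < Mdiv q x.
Proof. by move=> x0; rewrite divr_gt0 ?exprn_gt0. Qed.

Lemma mulX_Mdiv q x : 0 < x -> x ^+ q * Mdiv q x = M q.
Proof. by move=> x0; rewrite mulrCA divff ?mulr1// expf_neq0// gt_eqF. Qed.

Lemma MdivS q x : 0 < x -> Mdiv q.+1 x = Mdiv q x * (m q / x).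
Proof.
move=> x0; rewrite /Mdiv /quot_seq exprS.
by field; rewrite !gt_eqF ?exprn_gt0.
Qed.

Lemma Mdiv_le_succ q x : 0 < x -> x <= m q -> Mdiv q x <= Mdiv q.+1 x.
Proof.
move=> x0 xm; rewrite MdivS// ler_peMr ?(ltW (Mdiv_gt0 _ _ x0))//.
by rewrite ler_pdivlMr// mul1r.
Qed.

Lemma Mdiv_ge_succ q x : 0 < x -> m q <= x -> Mdiv q.+1 x <= Mdiv q x.
Proof.
move=> x0 mx; rewrite MdivS// ler_piMr ?(ltW (Mdiv_gt0 _ _ x0))//.
by rewrite ler_pdivrMr// mul1r.
Qed.

Lemma Mdiv_increasing_after p q x : 0 < x -> x <= m p -> (p <= q)%N ->
  Mdiv p x <= Mdiv q x.
Proof.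
move=> x0 xm pq.
apply: (@homo_leq_in _ [pred i | p <= i]%N (Mdiv^~ x) (fun a b => a <= b)).
- exact: lexx.
- exact: le_trans.
- by move=> i j /[!inE] pi _ k /andP[/ltnW ik _]; exact: leq_trans ik.
- move=> i /[!inE] pi _; apply: Mdiv_le_succ => //.
  exact: le_trans xm (quot_seq_nondecreasing _ _ pi).
- by rewrite inE.
- by rewrite inE.
- exact: pq.
Qed.

Lemma Mdiv_decreasing_before p q x : 0 < x -> m p.-1 <= x -> (q <= p)%N ->
  Mdiv p x <= Mdiv q x.
Proof.
move=> x0 mx qp.
apply: (@homo_leq_in _ [pred i | i <= p]%N (Mdiv^~ x) (fun a b => b <= a)).
- exact: lexx.
- by move=> y a b ya yb; exact: le_trans yb ya.
- by move=> i j _ /[!inE] jp k /andP[_ /ltnW kj]; exact: leq_trans kj jp.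
- move=> i _ /[!inE] ip; apply: Mdiv_ge_succ => //.
  apply: le_trans (quot_seq_nondecreasing _ _ _) mx.
  by rewrite -ltnS prednK// (leq_trans _ ip).
- by rewrite inE.
- by rewrite inE.
- exact: qp.
Qed.

(* [expNomega x = exp (- omega_M x)] for the associated function
   [omega_M x = sup_p log (x ^ p / M_p)]. *)
Definition expNomega (x : R) : R := inf (range (Mdiv^~ x)).

Lemma expNomega_le q x : 0 < x -> expNomega x <= Mdiv q x.
Proof.
move=> x0; apply: ge_inf; last by exists q.
by exists 0 => _ [k _ <-]; exact: ltW (Mdiv_gt0 _ _ x0).
Qed.

Lemma le_expNomega x y : (forall q, y <= Mdiv q x) -> y <= expNomega x.
Proof. by move=> hy; apply: lb_le_inf; [exists (Mdiv 0 x), 0%N | move=> _ [k _ <-]]. Qed.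

Lemma expNomega_ge0 x : 0 < x -> 0 <= expNomega x.
Proof. by move=> x0; apply: le_expNomega => q; exact: ltW (Mdiv_gt0 _ _ x0). Qed.

Lemma mulX_expNomega_le q x : 0 < x -> x ^+ q * expNomega x <= M q.
Proof.
by move=> x0; rewrite -(mulX_Mdiv _ _ x0) ler_wpM2l ?expNomega_le ?exprn_ge0 ?ltW.
Qed.

Lemma expNomegaE p x : (0 < p)%N -> m p.-1 <= x <= m p ->
  expNomega x = Mdiv p x.
Proof.
move=> p0 /andP[mx xm]; have x0 := lt_le_trans (quot_seq_gt0 _) mx.
apply/eqP; rewrite eq_le expNomega_le//=; apply: le_expNomega => q.
have [qp|pq] := leqP q p; first exact: Mdiv_decreasing_before.
exact/Mdiv_increasing_after/ltnW.
Qed.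

Fixpoint Mdiv_min (P : nat) (x : R) : R :=
  if P is P'.+1 then Num.min (Mdiv_min P' x) (Mdiv P x) else Mdiv 0 x.

Lemma Mdiv_min_le P q x : (q <= P)%N -> Mdiv_min P x <= Mdiv q x.
Proof.
elim: P => [|P IH] /=; first by rewrite leqn0 => /eqP ->.
rewrite leq_eqVlt => /predU1P[->|]; first by rewrite ge_min lexx orbT.
by rewrite ltnS => /IH h; rewrite ge_min h.
Qed.

Lemma Mdiv_min_mem P x : exists2 q, (q <= P)%N & Mdiv_min P x = Mdiv q x.
Proof.
elim: P => [|P [q qP eq_q]] /=; first by exists 0%N.
rewrite eq_q /Num.min; case: ifP => _; last by exists P.+1.
by exists q => //; rewrite (leq_trans qP).
Qed.

Lemma expNomega_Mdiv_min P x : 0 < x -> x <= m P -> expNomega x = Mdiv_min P x.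
Proof.
move=> x0 xm; apply/eqP; rewrite eq_le; apply/andP; split.
  by have [q _ ->] := Mdiv_min_mem P x; exact: expNomega_le.
apply: le_expNomega => q; have [qP|Pq] := leqP q P; first exact: Mdiv_min_le.
apply: le_trans (Mdiv_min_le P P x (leqnn P)) _.
exact/Mdiv_increasing_after/ltnW.
Qed.

Lemma continuous_Mdiv q x : 0 < x -> {for x, continuous (Mdiv q)}.
Proof.
move=> x0; apply: continuousM; first exact: cst_continuous.
by apply: continuousV; [rewrite gt_eqF ?exprn_gt0 | exact: exprn_continuous].
Qed.

Lemma continuous_Mdiv_min P x : 0 < x -> {for x, continuous (Mdiv_min P)}.
Proof.
move=> x0; elim: P => [|P IH] /=; first exact: continuous_Mdiv.
exact: continuous_min IH (continuous_Mdiv _ _ x0).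
Qed.

Hypothesis quot_seq_cvgy : m @ \oo --> +oo.

Lemma continuous_expNomega x : 0 < x -> {for x, continuous expNomega}.
Proof.
move=> x0; have [P _ xP] := (cvgryPgt _).1 quot_seq_cvgy x.
have {}xP : x < m P by apply: xP => /=.
have near_min : \forall y \near x, Mdiv_min P y = expNomega y.
  near=> y; apply/esym/expNomega_Mdiv_min; first by near: y; exact: lt_nbhsr.
  by apply/ltW; near: y; exact: lt_nbhsl.
apply: cvg_trans (near_eq_cvg near_min) _.
by rewrite (expNomega_Mdiv_min _ _ x0 (ltW xP)); exact: continuous_Mdiv_min.
Unshelve. all: by end_near.
Qed.

Lemma continuous_expNomega_on : {in I0y, continuous expNomega}.
Proof.
by move=> x; rewrite inE /= in_itv /= andbT; exact: continuous_expNomega.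
Qed.

Lemma moment_expNomega_integrable p :
  mu.-integrable I0y (EFin \o (fun x => x ^+ p * expNomega x)).
Proof.
have [] // := moment_dominated expNomega p (M p) (M p.+2) continuous_expNomega_on.
- by move=> x x0; rewrite ger0_norm ?expNomega_ge0 ?mulX_expNomega_le.
- by move=> x x0; rewrite ger0_norm ?expNomega_ge0 ?mulX_expNomega_le.
Qed.

Lemma moment_expNomega_ge p : (0 < p)%N ->
  M p * (m p - m p.-1) <= \int[mu]_(x in I0y) (x ^+ p * expNomega x).
Proof.
move=> p0; set a := m p.-1; set b := m p.
have a0 : 0 < a := quot_seq_gt0 _.
have ab : a <= b by exact: quot_seq_nondecreasing (leq_pred p).
have ab_sub : `[a, b] `<=` I0y.
  by move=> x /=; rewrite !in_itv /= andbT => /andP[ax _]; exact: lt_le_trans ax.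
have int_ab : (\int[mu]_(x in `[a, b]) (x ^+ p * expNomega x)%:E = (M p * (b - a))%:E)%E.
  transitivity (\int[mu]_(x in `[a, b]) (M p)%:E)%E.
    apply: eq_integral => x; rewrite inE /= in_itv /= => xab.
    have x0 := lt_le_trans a0 (andP xab).1.
    by rewrite (expNomegaE _ _ p0 xab) mulX_Mdiv.
  rewrite integral_cst//; have := lebesgue_measure_itv `[a, b]; rewrite /= => ->.
  case: ltP => [lt_ab|ba]; first by rewrite -EFinD -EFinM.
  by rewrite (@le_anti _ _ a b) ?ab ?ba// subrr mulr0 mule0.
rewrite /Rintegral -lee_fin fineK ?integrable_fin_num ?moment_expNomega_integrable//.
rewrite -int_ab; apply: ge0_subset_integral => //.
- by case/integrableP: (moment_expNomega_integrable p).
- move=> x; rewrite /= in_itv /= andbT => x0.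
  by rewrite lee_fin mulr_ge0 ?expNomega_ge0 ?exprn_ge0 ?ltW.
Qed.

End WeightSequence.

Section DerivationClosed.
Context {R : realType} {M : nat -> R}.
Hypothesis M_gt0 : forall p, 0 < M p.
Local Notation m := (quot_seq M).

Lemma dc_of_quot_seq_le (K H : R) : 1 < H -> (forall p, m p <= K * H ^+ p) -> dc M.
Proof.
move=> H1 mK; have K0 : 0 < K.
  by have := mK 0%N; rewrite expr0 mulr1; exact: lt_le_trans (quot_seq_gt0 M M_gt0 0).
exists K, H; split=> //; split=> // p.
rewrite -[M p.+1](divfK (lt0r_neq0 (M_gt0 p))) ler_wpM2r ?(ltW (M_gt0 p))//.
apply: le_trans (mK p) _; rewrite ler_wpM2l ?(ltW K0)// exprS ler_peMl//.
  by rewrite exprn_ge0// ltW// (lt_trans ltr01).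
exact: ltW.
Qed.

Lemma quot_seq_le_of_increments (C h : R) : 0 < h ->
  (forall p, (0 < p)%N -> m p - m p.-1 <= C * h ^+ p) ->
  forall p, m p <= (m 0%N + `|C|) * (1 + h) ^+ p.
Proof.
move=> h0 incr; set K := m 0%N + `|C|.
have CK : `|C| <= K by rewrite lerDr ltW// (quot_seq_gt0 M M_gt0).
elim=> [|p IH]; first by rewrite expr0 mulr1 lerDl.
have hH : h ^+ p <= (1 + h) ^+ p.
  by apply: lerXn2r; rewrite /= ?nnegrE ?lerDr ?addr_ge0 ?(ltW h0).
have Ch : C * h ^+ p.+1 <= K * h * (1 + h) ^+ p.
  apply: le_trans (ler_wpM2r (exprn_ge0 _ (ltW h0)) (ler_norm C)) _.
  rewrite exprS mulrA ler_pM ?mulr_ge0 ?exprn_ge0 ?(ltW h0)//.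
  by rewrite ler_wpM2r ?(ltW h0).
have step := incr p.+1 isT; rewrite exprS; lra.
Qed.

Lemma dc_M_succ2 (C0 H : R) : 0 <= C0 -> 0 <= H ->
  (forall p, M p.+1 <= C0 * H ^+ p.+1 * M p) ->
  forall p, M p.+2 <= C0 ^+ 2 * H ^+ 3 * (H ^+ p) ^+ 2 * M p.
Proof.
move=> C0_ge0 H_ge0 dcM p; apply: le_trans (dcM p.+1) _.
have C0H : 0 <= C0 * H ^+ p.+2 by rewrite mulr_ge0 ?exprn_ge0.
apply: le_trans (ler_wpM2l C0H (dcM p)) _.
suff -> : C0 ^+ 2 * H ^+ 3 * (H ^+ p) ^+ 2 * M p =
          C0 * H ^+ p.+2 * (C0 * H ^+ p.+1 * M p) by [].
by rewrite !exprS; ring.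
Qed.

End DerivationClosed.

Lemma normc_moments_le {R : realType} (phi : R -> complex.complex R) (D : nat -> R) p :
  {in `]0, +oo[%classic, continuous (fun x => complex.Re (phi x))} ->
  {in `]0, +oo[%classic, continuous (fun x => complex.Im (phi x))} ->
  (forall q x, 0 < x -> x ^+ q * normc (phi x) <= D q) ->
  normc (moments phi p) <= (D p + D p.+2) * pi.
Proof.
move=> cRe cIm phi_D.
have moment_part (f : R -> R) : {in `]0, +oo[%classic, continuous f} ->
    (forall x, `|f x| <= normc (phi x)) ->
    `|\int[lebesgue_measure]_(x in `]0, +oo[%classic) (x ^+ p * f x)|
      <= (D p + D p.+2) * (pi / 2).
  move=> cf f_phi; have f_D q x : 0 < x -> x ^+ q * `|f x| <= D q.
    move=> x0; apply: le_trans (phi_D q x x0).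
    by rewrite ler_wpM2l ?exprn_ge0 ?(ltW x0).
  exact: (moment_dominated f p _ _ cf (f_D p) (f_D p.+2)).2.
apply: le_trans (normc_le_normD _ _) _.
apply: le_trans (lerD (moment_part _ cRe (fun x => normc_ge_Re _))
                      (moment_part _ cIm (fun x => normc_ge_Im _))) _.
by rewrite -mulrDr -splitr.
Qed.

Lemma C_M_expNomega {R : realType} {M : nat -> R} : weight_sequence M ->
  C_M M (fun x => complex.Complex (expNomega M x) 0).
Proof.
case=> M_gt0 [_ [M_lc m_cvgy]]; split; [|split].
- exact: continuous_expNomega_on.
- by move=> x _; exact: cst_continuous.
- exists 1; split=> //; exists 1 => p x x0.
  rewrite normc_real expr1n mul1r ger0_norm ?expNomega_ge0// ler_pdivrMr// mul1r.
  exact: mulX_expNomega_le.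
Qed.

Lemma dc_of_moment_incl {R : realType} {M : nat -> R} : weight_sequence M ->
  (forall phi, C_M M phi -> Lambda_M M (moments phi)) -> dc M.
Proof.
move=> wM incl; have [M_gt0 [_ [M_lc m_cvgy]]] := wM.
have [h [h_gt0 [C HC]]] := incl _ (C_M_expNomega wM).
apply: (dc_of_quot_seq_le M_gt0 _ (1 + h)); first by rewrite ltrDl.
apply: (quot_seq_le_of_increments M_gt0 C h h_gt0) => p p_gt0.
have := HC p; rewrite ler_pdivrMr ?mulr_gt0 ?exprn_gt0//.
move=> /(le_trans (normc_ge_Re _)) /(le_trans (ler_norm _)).
move=> /(le_trans (@moment_expNomega_ge _ M M_gt0 M_lc m_cvgy p p_gt0)).
by rewrite mulrA mulrC ler_pM2r.
Qed.

Lemma moment_incl_of_dc {R : realType} {M : nat -> R} : weight_sequence M -> dc M ->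
  forall phi, C_M M phi -> Lambda_M M (moments phi).
Proof.
case=> M_gt0 [M0 _] [C0 [H [C0_gt0 [H_gt1 dcM]]]] phi [cRe [cIm [h [h_gt0 [C HC]]]]].
have H_gt0 : 0 < H := lt_trans ltr01 H_gt1.
have phi_bound q x : 0 < x -> x ^+ q * normc (phi x) <= C * h ^+ q * M q.
  by move=> x0; have := HC q x x0; rewrite ler_pdivrMr ?mulr_gt0 ?exprn_gt0// mulrA.
have C_ge0 : 0 <= C.
  have := phi_bound 0%N 1 ltr01; rewrite !expr0 mul1r mulr1 M0 mulr1.
  exact/le_trans/(le_trans (normr_ge0 _) (normc_ge_Re _)).
exists (h * H ^+ 2); split; first by rewrite mulr_gt0 ?exprn_gt0.
exists (pi * C * (1 + h ^+ 2 * C0 ^+ 2 * H ^+ 3)) => p.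
rewrite ler_pdivrMr ?mulr_gt0 ?exprn_gt0 ?mulr_gt0 ?exprn_gt0//.
apply: le_trans (normc_moments_le _ _ p cRe cIm phi_bound) _ => /=.
rewrite exprMn exprAC; set u := h ^+ p; set w := H ^+ p.
have M_succ2 : M p.+2 <= C0 ^+ 2 * H ^+ 3 * w ^+ 2 * M p.
  exact: dc_M_succ2 (ltW C0_gt0) (ltW H_gt0) dcM p.
have -> : h ^+ p.+2 = h ^+ 2 * u by rewrite -exprD add2n.
have u_ge0 : 0 <= u by rewrite exprn_ge0 ?ltW.
have w2_ge1 : 1 <= w ^+ 2 by rewrite !exprn_ege1 ?ltW.
have slack_w : 0 <= pi * C * u * M p * (w ^+ 2 - 1).
  by rewrite !mulr_ge0 ?subr_ge0 ?pi_ge0 ?(ltW (M_gt0 p)).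
have slack_M : 0 <= pi * C * h ^+ 2 * u * (C0 ^+ 2 * H ^+ 3 * w ^+ 2 * M p - M p.+2).
  by rewrite !mulr_ge0 ?subr_ge0 ?pi_ge0 ?(ltW h_gt0).
rewrite !expr2 in slack_w slack_M M_succ2 *; lra.
Qed.

Theorem proposition3p3 (R : realType) (M : nat -> R) :
  weight_sequence M -> (0 < gamma_index M)%E ->
  ((forall phi : R -> complex.complex R, C_M M phi -> Lambda_M M (moments phi))
   <-> dc M).
Proof.
move=> wM _; split; first exact: dc_of_moment_incl.
exact: moment_incl_of_dc.
Qed.
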